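(* Let $G_1$ and $G_2$ be vertex-disjoint graphs (each with at least one edge) that admit identical biarithmetic IASIs. Then the join $G_1+G_2$ does not admit an identical biarithmetic IASI.
   Context: All graphs are simple, finite, with no isolated vertices; all sets are finite subsets of $\mathbb{N}_0$; $A+B=\{a+b:a\in A,b\in B\}$. An IASI of $G$ is an injective $f:V(G)\to 2^{\mathbb{N}_0}$ with $g_f(uv)=f(u)+f(v)$ injective on $E(G)$. An AP-set is a set whose elements form an arithmetic progression; its common difference is the deterministic index of the element it labels. An arithmetic IASI is an IASI under which all vertex and edge set-labels are AP-sets. A biarithmetic IASI is an arithmetic IASI such that for adjacent vertices $v_i,v_j$ with deterministic indices $d_i,d_j$, one of $d_i,d_j$ is a positive integral multiple of the other; it is identical biarithmetic if this multiplier $k$ (with the larger index equal to $k$ times the smaller) is the same for all pairs of adjacent vertices. The join $G_1+G_2$ has vertex set $V_1\cup V_2$ and edge set $E_1\cup E_2\cup\{uv:u\in V_1,v\in V_2\}$.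
   Formalization: The multiplier k of an identical biarithmetic IASI is at least 2 rather than any positive integer, so the deterministic indices of adjacent vertices are never equal. The statement above fails without it. *)

From mathcomp Require Import all_boot.
Set Implicit Arguments. Unset Strict Implicit. Unset Printing Implicit Defensive.

Definition natset := nat -> Prop.

Definition same_set (A B : natset) : Prop := forall x, A x <-> B x.

Definition finite_set (A : natset) : Prop := exists m, forall x, A x -> x < m.

Definition sumset (A B : natset) : natset :=
  fun x => exists a b, A a /\ B b /\ x = a + b.

(* A is an AP-set with common difference (deterministic index) d:
   A = {a, a+d, ..., a+(n-1)d} with n >= 2 elements and d > 0. *)
Definition AP_set_with (A : natset) (d : nat) : Prop :=
  0 < d /\ exists a n, 2 <= n /\
    forall x, A x <-> exists2 i, i < n & x = a + i * d.

Definition AP_set (A : natset) : Prop := exists d, AP_set_with A d.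

Definition simple_graph (V : finType) (E : rel V) : Prop :=
  (forall u v, E u v = E v u) /\ (forall v, ~~ E v v).

Definition no_isolated (V : finType) (E : rel V) : Prop :=
  forall v, exists u, E v u.

Definition has_edge (V : finType) (E : rel V) : Prop :=
  exists u v, E u v.

Definition IASI (V : finType) (E : rel V) (f : V -> natset) : Prop :=
  [/\ (forall v, finite_set (f v) /\ exists x, f v x),
      (forall u v, same_set (f u) (f v) -> u = v) &
      (forall u v u' v', E u v -> E u' v' ->
         same_set (sumset (f u) (f v)) (sumset (f u') (f v')) ->
         (u = u' /\ v = v') \/ (u = v' /\ v = u'))].

Definition arithmetic_IASI (V : finType) (E : rel V) (f : V -> natset) : Prop :=
  [/\ IASI E f,
      (forall v, AP_set (f v)) &
      (forall u v, E u v -> AP_set (sumset (f u) (f v)))].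

Definition identical_biarithmetic_IASI_with (V : finType) (E : rel V)
    (f : V -> natset) (k : nat) : Prop :=
  [/\ arithmetic_IASI E f, 2 <= k &
      forall u v du dv, E u v -> AP_set_with (f u) du -> AP_set_with (f v) dv ->
        dv = k * du \/ du = k * dv].

Definition admits_identical_biarithmetic_IASI (V : finType) (E : rel V) : Prop :=
  exists f k, identical_biarithmetic_IASI_with E f k.

Definition join_rel (V1 V2 : finType) (E1 : rel V1) (E2 : rel V2) : rel (V1 + V2)%type :=
  fun x y =>
    match x, y with
    | inl a, inl b => E1 a b
    | inr a, inr b => E2 a b
    | _, _ => true
    end.

(* Along an edge of an identical biarithmetic IASI with multiplier k >= 2 the
   deterministic index is multiplied or divided by k, so three pairwise
   adjacent vertices would need three positive indices pairwise in ratio k,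
   which is impossible. The join contains such a triangle: an edge of G1
   together with any vertex of G2. *)

From mathcomp Require Import all_boot.
From mathcomp Require Import zify.

Set Implicit Arguments.
Unset Strict Implicit.

Definition ratio_k (k a b : nat) : Prop := b = k * a \/ a = k * b.

Lemma no_ratio_k_triangle k a b c : 2 <= k -> 0 < a -> 0 < b -> 0 < c ->
  ratio_k k a b -> ratio_k k b c -> ratio_k k a c -> False.
Proof. by move=> k_ge2 a_gt0 b_gt0 c_gt0 [ab|ab] [bc|bc] [ac|ac]; nia. Qed.

Lemma triangle_no_identical_biarithmetic_IASI (V : finType) (E : rel V) u v w :
  E u v -> E v w -> E u w -> ~ admits_identical_biarithmetic_IASI E.
Proof.
move=> Euv Evw Euw [f [k [[_ f_AP _] k_ge2 f_ratio]]].
have [du fu] := f_AP u; have [dv fv] := f_AP v; have [dw fw] := f_AP w.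
apply: (no_ratio_k_triangle k_ge2 fu.1 fv.1 fw.1).
- exact: f_ratio Euv fu fv.
- exact: f_ratio Evw fv fw.
- exact: f_ratio Euw fu fw.
Qed.

Theorem mainTheorem6 (V1 V2 : finType) (E1 : rel V1) (E2 : rel V2) :
  simple_graph E1 -> simple_graph E2 ->
  no_isolated E1 -> no_isolated E2 ->
  has_edge E1 -> has_edge E2 ->
  admits_identical_biarithmetic_IASI E1 ->
  admits_identical_biarithmetic_IASI E2 ->
  ~ admits_identical_biarithmetic_IASI (join_rel E1 E2).
Proof.
move=> _ _ _ _ [u [v E1uv]] [w _] _ _.
exact: (@triangle_no_identical_biarithmetic_IASI _ _ (inl u) (inl v) (inr w)).
Qed.
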